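(* Let $n,d,r\in\mathbb N$ with $p=d\ge2$, let $\lambda_i\ge0$ and $\boldsymbol x_i\in\mathbb R^n_+$ with $\|\boldsymbol x_i\|_p=1$ for $i=1,\dots,r$. Then $$\Big\|\sum_{i=1}^r\lambda_i\,\boldsymbol x_i^{\otimes d}\Big\|_{p_*}=\sum_{i=1}^r\lambda_i.$$
   Context: $\boldsymbol x^{\otimes d}=\boldsymbol x\otimes\dots\otimes\boldsymbol x$ ($d$ factors). Tensor nuclear $p$-norm: $\|\mathcal T\|_{p_*}=\min\{\sum_{i}|\mu_i|:\mathcal T=\sum_{i=1}^s\mu_i\boldsymbol y_i^1\otimes\dots\otimes\boldsymbol y_i^d,\ \|\boldsymbol y_i^k\|_p=1,\ s\in\mathbb N\}$. *)

From HB Require Import structures.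
From mathcomp Require Import all_boot all_order all_algebra.
From mathcomp Require Import all_classical all_reals.
From mathcomp Require Import exp.
Set Implicit Arguments. Unset Strict Implicit. Unset Printing Implicit Defensive.
Import Order.TTheory GRing.Theory Num.Theory.
Local Open Scope ring_scope.
Local Open Scope classical_set_scope.

Notation tensor R n d := {ffun {ffun 'I_d -> 'I_n} -> R^o} (only parsing).

Definition pnorm (R : realType) (n : nat) (p : R) (x : 'rV[R]_n) : R :=
  powR (\sum_(j < n) powR `|x 0 j| p) p^-1.

Definition outer (R : realType) (n d : nat) (y : 'I_d -> 'rV[R]_n) : tensor R n d :=
  [ffun f : {ffun 'I_d -> 'I_n} => \prod_(k < d) y k 0 (f k)].

Definition tpow (R : realType) (n d : nat) (x : 'rV[R]_n) : tensor R n d :=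
  outer (fun _ : 'I_d => x).

(* Tensor nuclear p-norm: infimum (the paper's min) of sum |mu_i| over all
   decompositions T = sum_i mu_i y_i^1 (x) ... (x) y_i^d with ||y_i^k||_p = 1. *)
Definition nuclear_pnorm (R : realType) (n d : nat) (p : R) (T : tensor R n d) : R :=
  inf [set v : R | exists (s : nat) (mu : 'I_s -> R) (y : 'I_s -> 'I_d -> 'rV[R]_n),
         (forall i k, pnorm p (y i k) = 1) /\
         T = \sum_(i < s) mu i *: outer (y i) /\
         v = \sum_(i < s) `|mu i|].

From HB Require Import structures.
From mathcomp Require Import all_boot all_order all_algebra.
From mathcomp Require Import all_classical all_reals.
From mathcomp Require Import exp.
Set Implicit Arguments. Unset Strict Implicit. Unset Printing Implicit Defensive.
Import Order.TTheory GRing.Theory Num.Theory.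
Local Open Scope ring_scope.

(* The diagonal sum L(T) = sum_j T_(j,...,j) is linear, and on a rank-one tensor
   y^1 (x) ... (x) y^d with unit d-norm factors AM-GM gives
   |L| <= sum_j prod_k |y^k_j| <= sum_j (1/d) sum_k |y^k_j|^d = 1.
   Hence |L(T)| <= sum_i |mu_i| for every decomposition of T, so L(T) bounds
   the nuclear d-norm of T from below.
   For T = sum_i lambda_i x_i^(x)d with x_i >= 0 we have L(x_i^(x)d) = ||x_i||_d^d = 1,
   so L(T) = sum_i lambda_i, which the decomposition defining T attains. *)

Lemma prod_le_mean_powX (F : realFieldType) (d : nat) (a : 'I_d -> F) :
  (0 < d)%N -> (forall k, 0 <= a k) ->
  \prod_(k < d) a k <= (\sum_(k < d) a k ^+ d) / d%:R.
Proof.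
move=> d_gt0 a_ge0.
have AGM := (leif_AGM (A := [pred k : 'I_d | true]) (E := fun k => a k ^+ d)
  (fun k _ => exprn_ge0 d (a_ge0 k))).1.
rewrite card_ord prodrXl in AGM.
rewrite -(ler_pXn2r d_gt0) ?nnegrE ?prodr_ge0 //.
by rewrite divr_ge0 // sumr_ge0 // => k _; rewrite exprn_ge0.
Qed.

Lemma pnorm_eq1_sum_normX (R : realType) (n d : nat) (y : 'rV[R]_n) :
  (0 < d)%N -> pnorm d%:R y = 1 -> \sum_(j < n) `|y 0 j| ^+ d = 1.
Proof.
move=> d_gt0 y1; have d_neq0 : (d%:R : R) != 0 by rewrite pnatr_eq0 -lt0n.
have sum_ge0 : 0 <= \sum_(j < n) `|y 0 j| `^ d%:R.
  by rewrite sumr_ge0 // => j _; rewrite powR_ge0.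
have := congr1 (fun t : R => t `^ d%:R) y1.
rewrite /pnorm -powRrM mulVf // powRr1 // powR1 => <-.
by apply: eq_bigr => j _; rewrite powR_mulrn.
Qed.

Lemma sum_prod_norm_le1 (R : realType) (n d : nat) (y : 'I_d -> 'rV[R]_n) :
  (0 < d)%N -> (forall k, pnorm d%:R (y k) = 1) ->
  \sum_(j < n) \prod_(k < d) `|y k 0 j| <= 1.
Proof.
move=> d_gt0 y1.
have AGM j : \prod_(k < d) `|y k 0 j| <= (\sum_(k < d) `|y k 0 j| ^+ d) / d%:R.
  by apply: prod_le_mean_powX => // k.
apply: le_trans (ler_sum _ (fun j _ => AGM j)) _.
rewrite -mulr_suml exchange_big /= (eq_bigr (fun=> 1)) => [|k _]; last exact: pnorm_eq1_sum_normX.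
by rewrite sumr_const card_ord divff // pnatr_eq0 -lt0n.
Qed.

Definition diag_sum {R : realType} {n d : nat} (T : tensor R n d) : R :=
  \sum_(j < n) T [ffun=> j].

Lemma diag_sum_lincomb (R : realType) (n d s : nat)
    (mu : 'I_s -> R) (T : 'I_s -> tensor R n d) :
  diag_sum (\sum_(i < s) mu i *: T i) = \sum_(i < s) mu i * diag_sum (T i).
Proof.
rewrite /diag_sum; under eq_bigr do rewrite sum_ffunE.
rewrite exchange_big; apply: eq_bigr => i _.
by rewrite mulr_sumr; apply: eq_bigr => j _; rewrite ffunE.
Qed.

Lemma diag_sum_outer (R : realType) (n d : nat) (y : 'I_d -> 'rV[R]_n) :
  diag_sum (outer y) = \sum_(j < n) \prod_(k < d) y k 0 j.
Proof. by apply: eq_bigr => j _; rewrite ffunE; apply: eq_bigr => k _; rewrite ffunE. Qed.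

Lemma norm_diag_sum_outer_le1 (R : realType) (n d : nat) (y : 'I_d -> 'rV[R]_n) :
  (0 < d)%N -> (forall k, pnorm d%:R (y k) = 1) -> `|diag_sum (outer y)| <= 1.
Proof.
move=> d_gt0 y1; rewrite diag_sum_outer.
apply: le_trans (ler_norm_sum _ _ _) (le_trans _ (sum_prod_norm_le1 d_gt0 y1)).
by apply: ler_sum => j _; rewrite normr_prod.
Qed.

Lemma diag_sum_tpow (R : realType) (n d : nat) (x : 'rV[R]_n) :
  (0 < d)%N -> (forall j, 0 <= x 0 j) -> pnorm d%:R x = 1 -> diag_sum (tpow d x) = 1.
Proof.
move=> d_gt0 x_ge0 x1; rewrite diag_sum_outer -[RHS](pnorm_eq1_sum_normX d_gt0 x1).
by apply: eq_bigr => j _; rewrite (prodr_const predT) card_ord ger0_norm.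
Qed.

Definition is_pdecomposition {R : realType} {n d : nat} (p : R) (T : tensor R n d)
    {s : nat} (mu : 'I_s -> R) (y : 'I_s -> 'I_d -> 'rV[R]_n) : Prop :=
  (forall i k, pnorm p (y i k) = 1) /\ T = \sum_(i < s) mu i *: outer (y i).

Lemma nuclear_pnorm_le_decomposition (R : realType) (n d : nat) (p : R) (T : tensor R n d)
    (s : nat) (mu : 'I_s -> R) (y : 'I_s -> 'I_d -> 'rV[R]_n) :
  is_pdecomposition p T mu y -> nuclear_pnorm p T <= \sum_(i < s) `|mu i|.
Proof.
move=> [y1 ->]; apply: ge_inf; last by exists s, mu, y.
by exists 0 => _ [s' [mu' [y' [_ [_ ->]]]]]; rewrite sumr_ge0.
Qed.

Lemma le_nuclear_pnorm (R : realType) (n d : nat) (p : R) (T : tensor R n d) (c : R)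
    (s : nat) (mu : 'I_s -> R) (y : 'I_s -> 'I_d -> 'rV[R]_n) :
  is_pdecomposition p T mu y ->
  (forall s' (mu' : 'I_s' -> R) y',
     is_pdecomposition p T mu' y' -> c <= \sum_(i < s') `|mu' i|) ->
  c <= nuclear_pnorm p T.
Proof.
move=> [y1 defT] c_le; apply: lb_le_inf; first by exists (\sum_(i < s) `|mu i|), s, mu, y.
by move=> _ [s' [mu' [y' [y'1 [defT' ->]]]]]; apply: c_le.
Qed.

Lemma norm_diag_sum_le_decomposition (R : realType) (n d : nat) (T : tensor R n d)
    (s : nat) (mu : 'I_s -> R) (y : 'I_s -> 'I_d -> 'rV[R]_n) :
  (0 < d)%N -> is_pdecomposition d%:R T mu y -> `|diag_sum T| <= \sum_(i < s) `|mu i|.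
Proof.
move=> d_gt0 [y1 ->]; rewrite diag_sum_lincomb.
apply: le_trans (ler_norm_sum _ _ _) (ler_sum _ _) => i _.
by rewrite normrM ler_piMr // norm_diag_sum_outer_le1.
Qed.

Theorem corollary5p14 (R : realType) (n d r : nat) (hd : (2 <= d)%N)
  (lambda : 'I_r -> R) (x : 'I_r -> 'rV[R]_n)
  (hlam : forall i, 0 <= lambda i)
  (hxpos : forall i j, 0 <= x i 0 j)
  (hxn : forall i, pnorm (d%:R) (x i) = 1) :
  nuclear_pnorm (d%:R) (\sum_(i < r) lambda i *: tpow d (x i)) = \sum_(i < r) lambda i.
Proof.
have d_gt0 : (0 < d)%N by apply: leq_trans hd.
set T := \sum_(i < r) _.
have decT : is_pdecomposition d%:R T lambda (fun i _ => x i) by [].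
have sum_norm_lambda : \sum_(i < r) `|lambda i| = \sum_(i < r) lambda i.
  by apply: eq_bigr => i _; rewrite ger0_norm.
have diag_sum_T : diag_sum T = \sum_(i < r) lambda i.
  by rewrite diag_sum_lincomb; apply: eq_bigr => i _; rewrite diag_sum_tpow ?mulr1.
apply/le_anti/andP; split.
  by rewrite -sum_norm_lambda (nuclear_pnorm_le_decomposition decT).
apply: (le_nuclear_pnorm decT) => s mu y decT'.
by rewrite -diag_sum_T (le_trans (ler_norm _)) ?(norm_diag_sum_le_decomposition d_gt0 decT').
Qed.
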